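(* Let $E$ be a finite directed graph and let $R$ be a left (respectively right) noetherian ring. If $E$ satisfies Condition (NE), then $(L_R(E))_0$ is left (respectively right) noetherian as a ring.
   Context: A directed graph $E=(E^0,E^1,s,r)$ has vertex set $E^0$, edge set $E^1$, source and range maps $s,r$; finite means $E^0,E^1$ finite. A path is a sequence of edges $f_1\cdots f_n$ with $s(f_{i+1})=r(f_i)$, of length $n$; a cycle is a path with $s(f_1)=r(f_n)$ and $s(f_i)\neq s(f_1)$ for $2\le i\le n$; it has an exit if some edge $f$ satisfies $s(f)=s(f_i)$ for some $i$ with $f\neq f_i$. Condition (NE): no cycle has an exit. $L_R(E)$ is the $R$-algebra generated by $v\in E^0$, $f,f^*$ ($f\in E^1$), with $R$ commuting with generators, subject to $v_iv_j=\delta_{i,j}v_i$; $s(f)f=fr(f)=f$, $r(f)f^*=f^*s(f)=f^*$; $f^*f'=\delta_{f,f'}r(f)$; and $\sum_{s(f)=v}ff^*=v$ whenever $s^{-1}(v)$ is nonempty and finite. With $\alpha^*=f_n^*\cdots f_1^*$, every element is a finite sum $\sum r_i\alpha_i\beta_i^*$ ($r_i\in R$, $\alpha_i,\beta_i$ paths, vertices as length-0 paths); $(L_R(E))_0$ is the subring of such sums with $\mathrm{len}(\alpha_i)=\mathrm{len}(\beta_i)$ for all $i$. *)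

(* Leavitt path algebras built as a quotient of the free
   (noncommutative) R-algebra {malg R[{fmonom letter}]} (multinomials' monalg)
   by the two-sided ideal generated by the Leavitt relations. *)
From HB Require Import structures.
From mathcomp Require Import all_boot all_order all_algebra.
From mathcomp Require Import generic_quotient.
From mathcomp Require Import boolp.
From mathcomp.multinomials Require Import monalg.
Set Implicit Arguments.
Unset Strict Implicit.
Unset Printing Implicit Defensive.
Import GRing.Theory.
Local Open Scope ring_scope.
Local Open Scope quotient_scope.

(* Noetherian conditions (ACC on one-sided ideals), stated for a subset
   S of a carrier T closed under given 0, subtraction, multiplication;
   this lets us speak of the subring (L_R(E))_0 of L_R(E).             *)

Definition left_ideal_in {T : Type} (S : T -> Prop) (z : T)
  (sub mul : T -> T -> T) (J : T -> Prop) : Prop :=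
  [/\ (forall x, J x -> S x), J z,
      (forall x y, J x -> J y -> J (sub x y)) &
      (forall a x, S a -> J x -> J (mul a x))].

Definition right_ideal_in {T : Type} (S : T -> Prop) (z : T)
  (sub mul : T -> T -> T) (J : T -> Prop) : Prop :=
  [/\ (forall x, J x -> S x), J z,
      (forall x y, J x -> J y -> J (sub x y)) &
      (forall a x, S a -> J x -> J (mul x a))].

Definition ACC {T : Type} (is_ideal : (T -> Prop) -> Prop) : Prop :=
  forall C : nat -> T -> Prop,
    (forall n, is_ideal (C n)) ->
    (forall n x, C n x -> C n.+1 x) ->
    exists N, forall n, (N <= n)%N -> forall x, C n x -> C N x.

Definition left_noetherian (R : ringType) : Prop :=
  ACC (left_ideal_in (fun _ : R => True) 0 (fun x y => x - y) *%R).
Definition right_noetherian (R : ringType) : Prop :=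
  ACC (right_ideal_in (fun _ : R => True) 0 (fun x y => x - y) *%R).

Section Leavitt.
Variables (V Ed : finType) (src rng : Ed -> V).

Definition is_cycle (c : seq Ed) : Prop :=
  exists f1 fs, c = f1 :: fs /\
    sorted (fun e f => rng e == src f) c /\
    src f1 = rng (last f1 fs) /\
    (forall f, f \in fs -> src f <> src f1).

Definition cycle_has_exit (c : seq Ed) : Prop :=
  exists i f, (i < size c)%N /\ src f = src (nth f c i) /\ f <> nth f c i.

Definition condition_NE : Prop :=
  forall c, is_cycle c -> ~ cycle_has_exit c.

(* letters: vertices v, real edges f, ghost edges f^* *)
Definition letter : choiceType := (V + (Ed + Ed))%type.
Definition Lv (v : V) : letter := inl v.
Definition Le (e : Ed) : letter := inr (inl e).
Definition Lg (e : Ed) : letter := inr (inr e).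

Variable R : ringType.

(* free unital R-algebra on the letters (R commutes with the letters) *)
Definition FA := {malg R[{fmonom letter}]}.
Definition word (w : seq letter) : FA := << FMonom w >>.
Definition X (l : letter) : FA := word [:: l].

(* the Leavitt relations, written as elements that must vanish *)
Inductive leavitt_rel : FA -> Prop :=
  | rel_vv v w : leavitt_rel (X (Lv v) * X (Lv w) - (if v == w then X (Lv v) else 0))
  | rel_sf f : leavitt_rel (X (Lv (src f)) * X (Le f) - X (Le f))
  | rel_fr f : leavitt_rel (X (Le f) * X (Lv (rng f)) - X (Le f))
  | rel_rg f : leavitt_rel (X (Lv (rng f)) * X (Lg f) - X (Lg f))
  | rel_gs f : leavitt_rel (X (Lg f) * X (Lv (src f)) - X (Lg f))
  | rel_CK1 f f' : leavitt_rel (X (Lg f) * X (Le f') -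
                                (if f == f' then X (Lv (rng f)) else 0))
  | rel_CK2 v : (exists f, src f = v) ->
      leavitt_rel ((\sum_(f : Ed | src f == v) X (Le f) * X (Lg f)) - X (Lv v))
  (* E^0 is finite, so L_R(E) is unital with unit sum_v v; quotienting the
     unital free algebra we identify its 1 with sum_v v *)
  | rel_unit : leavitt_rel (1 - \sum_(v : V) X (Lv v)).

Inductive leavitt_ideal : FA -> Prop :=
  | lid0 : leavitt_ideal 0
  | lid_gen a rho b : leavitt_rel rho -> leavitt_ideal (a * rho * b)
  | lid_add x y : leavitt_ideal x -> leavitt_ideal y -> leavitt_ideal (x + y).

Lemma leavitt_ideal_opp x : leavitt_ideal x -> leavitt_ideal (- x).
Proof.
elim=> [|a rho b Hr|x1 y1 _ H1 _ H2]; first by rewrite oppr0; constructor.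
  by rewrite -!mulNr; constructor.
by rewrite opprD; constructor.
Qed.

Definition lpa_eq (x y : FA) : bool := `[< leavitt_ideal (x - y) >].

Lemma lpa_eq_refl : reflexive lpa_eq.
Proof. by move=> x; apply/asboolP; rewrite subrr; constructor. Qed.

Lemma lpa_eq_sym : symmetric lpa_eq.
Proof.
move=> x y; apply/asboolP/asboolP => /leavitt_ideal_opp; by rewrite opprB.
Qed.

Lemma lpa_eq_trans : transitive lpa_eq.
Proof.
move=> y x z /asboolP H1 /asboolP H2; apply/asboolP.
by have := lid_add H1 H2; rewrite addrA subrK.
Qed.

Definition lpa_equiv : equiv_rel FA :=
  EquivRel lpa_eq lpa_eq_refl lpa_eq_sym lpa_eq_trans.

Definition LPA := {eq_quot lpa_equiv}.

(* ring operations on L_R(E), induced from FA (well defined since the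
   kernel is a two-sided ideal) *)
Definition lpa_zero : LPA := \pi_LPA 0.
Definition lpa_sub (x y : LPA) : LPA := \pi_LPA (repr x - repr y).
Definition lpa_mul (x y : LPA) : LPA := \pi_LPA (repr x * repr y).

(* paths: a start vertex v and a list of consecutive edges starting at v;
   the path of length 0 at v is the vertex v itself *)
Definition is_path (p : V * seq Ed) : bool :=
  (if p.2 is e :: _ then src e == p.1 else true) &&
  sorted (fun e f => rng e == src f) p.2.

Definition plen (p : V * seq Ed) : nat := size p.2.

Definition pword (p : V * seq Ed) : FA :=
  if p.2 is [::] then X (Lv p.1) else word (map Le p.2).
Definition pword_star (p : V * seq Ed) : FA :=
  if p.2 is [::] then X (Lv p.1) else word (map Lg (rev p.2)).

Definition LPA0 (x : LPA) : Prop :=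
  exists s : seq (R * (V * seq Ed) * (V * seq Ed)),
    all (fun t => [&& is_path t.1.2, is_path t.2 & plen t.1.2 == plen t.2]) s /\
    x = \pi_LPA (\sum_(t <- s) t.1.1 *: (pword t.1.2 * pword_star t.2)).

Definition LPA0_left_noetherian : Prop :=
  ACC (left_ideal_in LPA0 lpa_zero lpa_sub lpa_mul).
Definition LPA0_right_noetherian : Prop :=
  ACC (right_ideal_in LPA0 lpa_zero lpa_sub lpa_mul).

End Leavitt.

(* Under (NE), a path with more than |E^0| edges runs into a cycle, which has no
   exit; from then on every edge f of the path is the only edge leaving s(f), so
   (CK2) reads f f^* = s(f), and two such edges with the same range coincide.
   Hence a monomial alpha beta^* with len alpha = len beta > |E^0| either vanishes
   (the last edges have different ranges) or equals alpha' beta'^* with both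
   paths one edge shorter.  So (L_R(E))_0 is spanned, as a left and as a right
   R-module, by the finitely many alpha beta^* with len <= |E^0|, and it contains
   R as the elements sum_v r v.  A one-sided ideal of (L_R(E))_0 therefore pulls
   back to a submodule of R^N, and ACC passes from R^N to these ideals. *)

From mathcomp Require Import all_boot all_order all_algebra.
From mathcomp Require Import generic_quotient boolp.
From mathcomp.multinomials Require Import monalg.
Set Implicit Arguments.
Unset Strict Implicit.
Unset Printing Implicit Defensive.
Import GRing.Theory.
Local Open Scope ring_scope.
Local Open Scope quotient_scope.

Lemma chain_le (T : Type) (C : nat -> T -> Prop) :
  (forall n x, C n x -> C n.+1 x) -> forall m n, (m <= n)%N -> forall x, C m x -> C n x.
Proof.
move=> Cmono; apply: (@homo_leq _ C (fun A B => forall x, A x -> B x)) => //.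
by move=> B A D AB BD x /AB /BD.
Qed.

Section ActionSubmodules.
Variables (R : pzRingType) (act : R -> R -> R).
Hypothesis act_r0 : forall a, act a 0 = 0.

Definition act_ideal (J : R -> Prop) : Prop :=
  [/\ J 0, (forall x y, J x -> J y -> J (x - y)) &
      (forall a x, J x -> J (act a x))].

(* R^n is encoded as the vectors of [nat -> R] supported in [0, n). *)
Definition act_submod (n : nat) (D : (nat -> R) -> Prop) : Prop :=
  [/\ (forall x, D x -> forall i, (n <= i)%N -> x i = 0), D (fun _ => 0),
      (forall x y, D x -> D y -> D (fun i => x i - y i)) &
      (forall a x, D x -> D (fun i => act a (x i)))].

Lemma act_submod_coord n D :
  act_submod n.+1 D -> act_ideal (fun r => exists2 x, D x & x n = r).
Proof.
case=> _ D0 DB DZ; split; first by exists (fun _ => 0).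
  by move=> _ _ [x Dx <-] [y Dy <-]; exists (fun i => x i - y i); first exact: DB.
by move=> a _ [x Dx <-]; exists (fun i => act a (x i)); first exact: DZ.
Qed.

Lemma act_submod_coord_kernel n D :
  act_submod n.+1 D -> act_submod n (fun x => D x /\ x n = 0).
Proof.
case=> Dsupp D0 DB DZ; split=> //.
- move=> x [Dx xn0] i; rewrite leq_eqVlt => /predU1P[<- //|]; exact: Dsupp.
- by move=> x y [Dx ->] [Dy ->]; rewrite subr0; split; first exact: DB.
- by move=> a x [Dx ->]; rewrite act_r0; split; first exact: DZ.
Qed.

Hypothesis ACC_act_ideal : ACC act_ideal.

Lemma ACC_act_submod n : ACC (act_submod n).
Proof.
elim: n => [|n IHn] C Csub Cmono.
  exists 0%N => n _ x Cx; have [Csupp _ _ _] := Csub n; have [_ C00 _ _] := Csub 0%N.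
  suff -> : x = (fun _ => 0) by [].
  by apply: funext => i; exact: Csupp.
have Cle := chain_le Cmono.
pose A k r := exists2 x, C k x & x n = r.
have [N1 stA] : exists N, forall k, (N <= k)%N -> forall r, A k r -> A N r.
  apply: ACC_act_ideal => [k|k r [x Cx <-]]; first exact: act_submod_coord.
  by exists x => //; apply: Cmono.
have [N2 stB] := IHn _ (fun k => act_submod_coord_kernel (Csub k))
  (fun k x '(conj Cx xn0) => conj (Cmono k x Cx) xn0).
exists (maxn N1 N2) => k le_k x Cx.
have [le1 le2] := (leq_maxl N1 N2, leq_maxr N1 N2).
have [y Cy yx] := stA k (leq_trans le1 le_k) _ (ex_intro2 _ _ x Cx erefl).
have [_ _ CkB _] := Csub k; have [_ _ CB _] := Csub (maxn N1 N2).
have [Cyx _] : C N2 (fun i => y i - x i) /\ y n - x n = 0.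
  apply: (stB k (leq_trans le2 le_k)); split; last by rewrite yx subrr.
  by apply: CkB Cx; apply: Cle Cy; apply: leq_trans le_k.
have -> : x = (fun i => y i - (y i - x i)) by apply: funext => i; rewrite subKr.
by apply: CB; [apply: Cle Cy | apply: Cle Cyx].
Qed.

End ActionSubmodules.

Lemma left_noetherian_ACC (R : nzRingType) :
  left_noetherian R -> ACC (act_ideal (fun a r : R => a * r)).
Proof.
move=> accR C Cid; apply: accR => n; have [C0 CB CM] := Cid n.
by split=> // a x _; apply: CM.
Qed.

Lemma right_noetherian_ACC (R : nzRingType) :
  right_noetherian R -> ACC (act_ideal (fun a r : R => r * a)).
Proof.
move=> accR C Cid; apply: accR => n; have [C0 CB CM] := Cid n.
by split=> // a x _; apply: CM.
Qed.

Record two_sided_ideal (T : pzRingType) (I : T -> Prop) : Prop := TwoSidedIdeal {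
  ideal0 : I 0;
  idealD : forall x y, I x -> I y -> I (x + y);
  idealN : forall x, I x -> I (- x);
  idealMl : forall a x, I x -> I (a * x);
  idealMr : forall a x, I x -> I (x * a)
}.

(* Stated for an abstract ring: rewriting with ring laws on concrete elements of
   the free algebra makes Rocq unfold and evaluate their products. *)
Section IdealCongruence.
Variables (T : pzRingType) (I : T -> Prop).
Hypothesis idI : two_sided_ideal I.
Local Notation "x === y" := (I (x - y)) (at level 70).

Lemma eqv_refl x : x === x.
Proof. by rewrite subrr; apply: ideal0. Qed.

Lemma eqv_sym x y : x === y -> y === x.
Proof. by move/(idealN idI); rewrite opprB. Qed.

Lemma eqv_trans y x z : x === y -> y === z -> x === z.
Proof. by move=> Ixy Iyz; have := idealD idI Ixy Iyz; rewrite addrA subrK. Qed.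

Lemma eqv_add x y x' y' : x === x' -> y === y' -> x + y === x' + y'.
Proof. by move=> Ix Iy; have := idealD idI Ix Iy; rewrite opprD addrACA. Qed.

Lemma eqv_add0l x y y' : x === 0 -> y === y' -> x + y === y'.
Proof. by move=> Ix Iy; rewrite -[y']add0r; apply: eqv_add. Qed.

Lemma eqv_opp x x' : x === x' -> - x === - x'.
Proof. by move/(idealN idI); rewrite opprD. Qed.

Lemma eqv_sum (J : Type) (s : seq J) (F G : J -> T) :
  (forall i, F i === G i) -> \sum_(i <- s) F i === \sum_(i <- s) G i.
Proof.
move=> FG; elim: s => [|i s IHs]; first by rewrite !big_nil; apply: eqv_refl.
by rewrite !big_cons; apply: eqv_add.
Qed.

Lemma eqv_mul x y x' y' : x === x' -> y === y' -> x * y === x' * y'.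
Proof.
move=> Ix Iy; apply: (@eqv_trans (x' * y)).
  by rewrite -mulrBl; apply: idealMr.
by rewrite -mulrBr; apply: idealMl.
Qed.

Lemma eqv_mulA x y z w : x * y * z === w <-> x * (y * z) === w.
Proof. by rewrite mulrA. Qed.

Lemma eqv_mul_mid0 x a b y : a * b === 0 -> x * a * (b * y) === 0.
Proof.
rewrite !subr0 mulrA -(mulrA x) => Iab.
by apply: (idealMr idI); apply: (idealMl idI).
Qed.

Lemma eqv_mul_mid_idem x a b c y : a * b === c -> c * c === c ->
  x * a * (b * y) === x * c * (c * y).
Proof.
move=> abc idem_c; rewrite !mulrA -[x * a * b](mulrA x) -[x * c * c](mulrA x).
apply: eqv_mul _ (eqv_refl _); apply: eqv_mul (eqv_refl _) _.
exact: eqv_trans abc (eqv_sym idem_c).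
Qed.

End IdealCongruence.

Section LeavittCongruence.
Variables (V Ed : finType) (src rng : Ed -> V) (R : nzRingType).
Local Notation LI := (@leavitt_ideal V Ed src rng R).
Local Notation "x === y" := (LI (x - y)) (at level 70).

Lemma leavitt_two_sided_ideal : two_sided_ideal LI.
Proof.
split; [exact: lid0|exact: lid_add|exact: leavitt_ideal_opp| |].
  move=> a x; elim=> [|b rho c Hrho|x1 x2 _ I1 _ I2].
  - by rewrite mulr0; apply: lid0.
  - by rewrite !mulrA; apply: lid_gen.
  - by rewrite mulrDr; apply: lid_add.
move=> a x; elim=> [|b rho c Hrho|x1 x2 _ I1 _ I2].
- by rewrite mul0r; apply: lid0.
- by rewrite -(mulrA (b * rho)); apply: lid_gen.
- by rewrite mulrDl; apply: lid_add.
Qed.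

Lemma leavitt_rel_eqv x y : leavitt_rel src rng (x - y) -> x === y.
Proof. by move=> Hrel; rewrite -[_ - _]mul1r -[_ * _]mulr1; apply: lid_gen. Qed.

Lemma eqv_scale (r : R) x x' : x === x' -> r *: x === r *: x'.
Proof.
by move=> Ix; rewrite -scalerBr -mulr_algl; apply: (idealMl leavitt_two_sided_ideal).
Qed.

Lemma eqv_scale0 (r : R) x : x === 0 -> r *: x === 0.
Proof. by move/(eqv_scale r); rewrite scaler0. Qed.

Local Notation LPA := (LPA src rng R).
Local Notation idL := leavitt_two_sided_ideal.

Lemma pi_eqv x y : x === y -> \pi_LPA x = \pi_LPA y.
Proof. by move=> Ixy; apply/eqquotP/asboolP. Qed.

Lemma repr_pi_eqv x : repr (\pi_LPA x) === x.
Proof. by have /eqquotP/asboolP := reprK (\pi_LPA x). Qed.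

Lemma lpa_mul_pi x y : lpa_mul (\pi_LPA x) (\pi_LPA y) = \pi_LPA (x * y).
Proof. by apply: pi_eqv; apply: (eqv_mul idL); apply: repr_pi_eqv. Qed.

Lemma lpa_sub_pi x y : lpa_sub (\pi_LPA x) (\pi_LPA y) = \pi_LPA (x - y).
Proof.
apply: pi_eqv; apply: (eqv_add idL); first exact: repr_pi_eqv.
by apply: (eqv_opp idL); apply: repr_pi_eqv.
Qed.

End LeavittCongruence.

Section Words.
Variables (V Ed : finType) (R : nzRingType).
Local Notation word := (@word V Ed R).
Local Notation X := (@X V Ed R).

Lemma word_cat u w : word (u ++ w) = word u * word w.
Proof.
rewrite /word malgM_def fgmulUU mulr1; congr << _ >>.
by apply/eqP; rewrite fmP fmM.
Qed.

Lemma word_cons l u : word (l :: u) = X l * word u.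
Proof. by rewrite -word_cat. Qed.

Lemma word_rcons u l : word (rcons u l) = word u * X l.
Proof. by rewrite -cats1 word_cat. Qed.

Lemma word_nil : word [::] = 1.
Proof. by congr << _ >>; apply/eqP; rewrite fmP fm1. Qed.

Lemma word_mulC u (a : R) : word u * a%:MP = a *: word u.
Proof.
rewrite /word malgM_def fgmulUU mulm1 mul1r.
apply/malgP => k; rewrite mcoeffZ !mcoeffU.
by case: (_ == k); rewrite ?mulr1n ?mulr0n ?mulr1 ?mulr0.
Qed.

End Words.

Lemma iter_periodic_eq (T : Type) (f : T -> T) x a b :
  iter a.+1 f x = x -> iter b.+1 f x = x -> iter a f x = iter b f x.
Proof.
wlog le_ab : a b / (a <= b)%N.
  by move=> W ha hb; case: (leqP a b) => [|/ltnW] le; [|symmetry]; apply: W.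
move=> ha; rewrite -(subnK le_ab) -addnS iterD ha => hd.
by rewrite addnC iterD hd.
Qed.

Section ExitlessCycles.
Variables (V Ed : finType) (src rng : Ed -> V).

Definition consecutive (e f : Ed) : bool := rng e == src f.

Definition sole_out_edge (e : Ed) : Prop := forall f, src f = src e -> f = e.

(* [e] itself when no edge leaves [rng e] *)
Definition succ_edge (e : Ed) : Ed := odflt e [pick f | src f == rng e].

Definition on_exitless_cycle (e : Ed) : Prop :=
  [/\ exists2 k, (0 < k)%N & iter k succ_edge e = e,
      forall i, sole_out_edge (iter i succ_edge e) &
      forall i, consecutive (iter i succ_edge e) (succ_edge (iter i succ_edge e))].

Lemma consecutive_succ_edge e f : consecutive e f -> consecutive e (succ_edge e).
Proof.
rewrite /consecutive /succ_edge => ef.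
by case: pickP => [g|/(_ f)/negbT/negP[]]; rewrite eq_sym.
Qed.

Lemma succ_edge_sole e f : consecutive e f -> sole_out_edge f -> succ_edge e = f.
Proof.
move=> ef sole_f; apply: sole_f.
by rewrite -(eqP (consecutive_succ_edge ef)) (eqP ef).
Qed.

Lemma on_exitless_cycle_succ e f : on_exitless_cycle e -> consecutive e f ->
  f = succ_edge e /\ on_exitless_cycle (succ_edge e).
Proof.
move=> [[k k_gt0 ek] sole cons] ef; split.
  by apply: (sole 1%N); rewrite -(eqP ef); apply/eqP/(cons 0%N).
split=> [|i|i]; rewrite -?iterSr; [|exact: sole|exact: cons].
by exists k => //; rewrite -iterSr iterS ek.
Qed.

Lemma on_exitless_cycle_last e es : path consecutive e es ->
  on_exitless_cycle e -> on_exitless_cycle (last e es).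
Proof.
elim: es e => [|f es IHes] e //= /andP[ef fes] Ce.
by apply: IHes fes _; have [-> //] := on_exitless_cycle_succ Ce ef.
Qed.

Lemma on_exitless_cycle_rng_inj e f :
  on_exitless_cycle e -> on_exitless_cycle f -> rng e = rng f -> e = f.
Proof.
move=> [[k k_gt0 ek] sole_e cons_e] [[l l_gt0 fl] _ cons_f] ef.
have succ_ef : succ_edge e = succ_edge f.
  apply/esym/(sole_e 1%N).
  by rewrite /= -(eqP (cons_f 0%N)) -(eqP (cons_e 0%N)) ef.
have e_iter : iter k.-1 succ_edge (succ_edge f) = e.
  by rewrite -succ_ef -iterSr prednK.
have f_iter : iter l.-1 succ_edge (succ_edge f) = f by rewrite -iterSr prednK.
rewrite -e_iter -{2}f_iter; apply: iter_periodic_eq; rewrite prednK //.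
  by rewrite -succ_ef -iterSr iterS ek.
by rewrite -iterSr iterS fl.
Qed.

Lemma cycle_on_exitless_cycle c : cycle consecutive c -> uniq c ->
  {in c, forall x, sole_out_edge x} -> {in c, forall x, on_exitless_cycle x}.
Proof.
move=> cyc_c uniq_c sole_c x xc.
have succ_next y : y \in c -> succ_edge y = next c y.
  move=> yc; apply: succ_edge_sole; first exact: next_cycle cyc_c yc.
  by apply/sole_c; rewrite mem_next.
have iter_mem n : iter n (next c) x \in c by elim: n => //= n IHn; rewrite mem_next.
have iter_next n : iter n succ_edge x = iter n (next c) x.
  by elim: n => //= n ->; apply: succ_next.
split=> [|n|n]; rewrite ?iter_next.
- exists (order (next c) x); first exact: order_gt0.
  by rewrite iter_next iter_order //; apply: (can_inj (prev_next uniq_c)).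
- exact: sole_c.
- by rewrite succ_next //; apply: next_cycle cyc_c _.
Qed.

Lemma is_cycle_cycle c : is_cycle src rng c -> cycle consecutive c.
Proof.
case=> f1 [fs [-> [path_c [ends _]]]]; rewrite /= rcons_path.
by apply/andP; split; [exact: path_c|rewrite /consecutive ends].
Qed.

Hypothesis NE : condition_NE src rng.

Lemma is_cycle_sole_out_edge c : is_cycle src rng c -> {in c, forall x, sole_out_edge x}.
Proof.
move=> cyc_c x xc f fx; apply/eqP/negPn/negP => /eqP fNx.
apply: (NE cyc_c); exists (index x c), f.
by rewrite nth_index // index_mem.
Qed.

Lemma first_return_cycle e es : path consecutive e es ->
  src e \in map src es -> uniq (map src es) ->
  exists2 p, is_cycle src rng (e :: p) & uniq (e :: p).
Proof.
move=> path_es back uniq_es.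
pose at_e f := src f == src e.
have has_e : has at_e es.
  by apply/hasP; case/mapP: back => f fes ef; exists f; rewrite // /at_e ef.
set i := find at_e es; have i_lt : (i < size es)%N by rewrite -has_find.
set p := take i es.
have p_off f : f \in p -> src f != src e.
  move=> /(nthP e)[j]; rewrite size_take i_lt => j_lt <-.
  by rewrite nth_take //; apply: negbT (before_find e j_lt).
have back_src : src (nth e es i) = src e by apply/eqP; exact: (nth_find e has_e).
move: path_es; rewrite -(cat_take_drop i es) (drop_nth e i_lt) cat_path -/p /=.
case/and3P=> path_p closing _.
exists p.
  exists e, p; split; [by []|split; [exact: path_p|split]].
    by rewrite -back_src (eqP closing).
  by move=> f /p_off /eqP.
apply/andP; split; first by apply/negP => /p_off; rewrite eqxx.
by apply: (@map_uniq _ _ src); rewrite map_take take_uniq.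
Qed.

Lemma sorted_repeated_src_exitless es : sorted consecutive es ->
  ~~ uniq (map src es) -> exists2 e, e \in es & on_exitless_cycle e.
Proof.
elim: es => [|e es IHes] //= sorted_es.
have sorted_tl := path_sorted sorted_es.
have [uniq_tl|] := boolP (uniq (map src es)); last first.
  by move=> /(IHes sorted_tl)[f fes Cf] _; exists f; rewrite // inE fes orbT.
rewrite andbT negbK => back.
have [p cyc_p uniq_p] := first_return_cycle sorted_es back uniq_tl.
exists e; first by rewrite inE eqxx.
apply: (cycle_on_exitless_cycle (is_cycle_cycle cyc_p) uniq_p) => //.
  exact: is_cycle_sole_out_edge.
by rewrite inE eqxx.
Qed.

Lemma long_path_last_exitless s : sorted consecutive s -> (#|V| < size s)%N ->
  forall x, on_exitless_cycle (last x s).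
Proof.
move=> sorted_s long_s x.
have [e es_in Ce] : exists2 e, e \in s & on_exitless_cycle e.
  apply: sorted_repeated_src_exitless => //; apply/negP => /card_uniqP.
  rewrite size_map => card_s.
  by move: (max_card (mem (map src s))); rewrite card_s leqNgt long_s.
case/splitPr: es_in sorted_s => p1 p2 sorted_s.
rewrite last_cat /=; apply: on_exitless_cycle_last Ce.
by have [_] := cat_sorted2 sorted_s.
Qed.

End ExitlessCycles.

Section PathMonomials.
Variables (V Ed : finType) (src rng : Ed -> V) (R : nzRingType).
Local Notation FA := (FA V Ed R).
Local Notation word := (@word V Ed R).
Local Notation X := (@X V Ed R).
Local Notation Lv := (@Lv V Ed).
Local Notation Le := (@Le V Ed).
Local Notation Lg := (@Lg V Ed).
Local Notation pword := (@pword V Ed R).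
Local Notation pword_star := (@pword_star V Ed R).
Local Notation is_path := (is_path src rng).
Local Notation "x === y" := (@leavitt_ideal V Ed src rng R (x - y)) (at level 70).
Local Notation idL := (@leavitt_two_sided_ideal V Ed src rng R).

Definition pmon (a b : V * seq Ed) : FA := pword a * pword_star b.

Lemma pword_rcons v s e : pword (v, rcons s e) = word (map Le s) * X (Le e).
Proof. by rewrite -word_rcons -map_rcons; case: s. Qed.

Lemma pword_star_rcons v s e :
  pword_star (v, rcons s e) = X (Lg e) * word (map Lg (rev s)).
Proof. by rewrite -word_cons /pword_star rev_rcons; case: s. Qed.

Lemma is_path_rcons v s e : is_path (v, rcons s e) -> is_path (v, s).
Proof.
case/andP=> /= src_s sorted_s; apply/andP; split; first by case: s src_s {sorted_s}.
by case: s {src_s} sorted_s => //= f s; rewrite rcons_path => /andP[].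
Qed.

Lemma is_path_rcons2_rng_src v s f e : is_path (v, rcons (rcons s f) e) -> rng f = src e.
Proof.
by case/andP=> _ /=; rewrite -!cats1 -catA => /cat_sorted2[_] /=; rewrite andbT => /eqP.
Qed.

Lemma is_path_single_src v e : is_path (v, [:: e]) -> src e = v.
Proof. by case/andP=> /eqP. Qed.

Lemma vertex_idem u : X (Lv u) * X (Lv u) === X (Lv u).
Proof. by apply: leavitt_rel_eqv; have := rel_vv src rng R u u; rewrite eqxx. Qed.

Lemma vertex_orth u w : u != w -> X (Lv u) * X (Lv w) === 0.
Proof.
by move/negbTE=> uw; apply: leavitt_rel_eqv; have := rel_vv src rng R u w; rewrite uw.
Qed.

Lemma edge_ghost_orth e f : rng e != rng f -> X (Le e) * X (Lg f) === 0.
Proof.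
move=> ef.
apply: (eqv_trans idL (y := X (Le e) * X (Lv (rng e)) * (X (Lv (rng f)) * X (Lg f)))).
  apply: (eqv_sym idL); apply: (eqv_mul idL); apply: leavitt_rel_eqv.
    exact: rel_fr.
  exact: rel_rg.
by apply: (eqv_mul_mid0 idL); apply: vertex_orth.
Qed.

Lemma sole_out_edge_CK2 e : sole_out_edge src e ->
  X (Le e) * X (Lg e) === X (Lv (src e)).
Proof.
move=> sole_e; have := @rel_CK2 _ _ src rng R (src e) (ex_intro _ e erefl).
rewrite (big_pred1 e) => [|f /=]; first exact: leavitt_rel_eqv.
by apply/eqP/eqP => [/sole_e|->].
Qed.

Lemma pword_vertex_end v s e : is_path (v, rcons s e) ->
  word (map Le s) * X (Lv (src e)) === pword (v, s).
Proof.
case/lastP: s => [/is_path_single_src ->|s f /is_path_rcons2_rng_src <-].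
  by rewrite word_nil mul1r; apply: (eqv_refl idL).
rewrite pword_rcons map_rcons word_rcons; apply/eqv_mulA.
by apply: (eqv_mul idL (eqv_refl idL _)); apply: leavitt_rel_eqv; apply: rel_fr.
Qed.

Lemma pword_star_vertex_start w s e : is_path (w, rcons s e) ->
  X (Lv (src e)) * word (map Lg (rev s)) === pword_star (w, s).
Proof.
case/lastP: s => [/is_path_single_src ->|s f /is_path_rcons2_rng_src <-].
  by rewrite word_nil mulr1; apply: (eqv_refl idL).
rewrite pword_star_rcons rev_rcons map_cons word_cons; apply/eqv_mulA.
by apply: (eqv_mul idL _ (eqv_refl idL _)); apply: leavitt_rel_eqv; apply: rel_rg.
Qed.

Lemma pmon_rcons v s e w t f :
  pmon (v, rcons s e) (w, rcons t f) =
  word (map Le s) * X (Le e) * (X (Lg f) * word (map Lg (rev t))).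
Proof. by rewrite /pmon pword_rcons pword_star_rcons. Qed.

Lemma pmon_rcons_orth v s e w t f : rng e != rng f ->
  pmon (v, rcons s e) (w, rcons t f) === 0.
Proof.
by move=> ef; rewrite pmon_rcons; apply: (eqv_mul_mid0 idL); apply: edge_ghost_orth.
Qed.

Lemma pmon_rcons_sole v s w t e :
  is_path (v, rcons s e) -> is_path (w, rcons t e) -> sole_out_edge src e ->
  pmon (v, rcons s e) (w, rcons t e) === pmon (v, s) (w, t).
Proof.
move=> path_s path_t sole_e; rewrite pmon_rcons.
apply: (eqv_trans idL); first apply: (eqv_mul_mid_idem idL).
- exact: sole_out_edge_CK2.
- exact: vertex_idem.
apply: (eqv_mul idL); first exact: pword_vertex_end path_s.
exact: pword_star_vertex_start path_t.
Qed.

End PathMonomials.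

Section Reduction.
Variables (V Ed : finType) (src rng : Ed -> V) (R : nzRingType).
Local Notation is_path := (is_path src rng).
Local Notation pmon := (@pmon V Ed R).
Local Notation "x === y" := (@leavitt_ideal V Ed src rng R (x - y)) (at level 70).
Local Notation idL := (@leavitt_two_sided_ideal V Ed src rng R).
Hypothesis NE : condition_NE src rng.

Lemma pmon_reduce a b : is_path a -> is_path b -> plen a = plen b ->
  pmon a b === 0 \/
  exists a' b', [/\ (plen a' <= #|V|)%N, (plen b' <= #|V|)%N & pmon a b === pmon a' b'].
Proof.
move eqn : (plen a) => n; elim: n a b eqn => [|n IHn] [v s] [w t];
  rewrite /plen /= => size_s path_a path_b size_st.
  by right; exists (v, s), (w, t); rewrite /plen /= -size_st size_s;
    split; [| |apply: (eqv_refl idL)].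
have [short|long] := leqP n.+1 #|V|.
  by right; exists (v, s), (w, t); rewrite /plen /= -size_st size_s;
    split; [| |apply: (eqv_refl idL)].
have exitless x p g : is_path (x, rcons p g) -> size p = n -> on_exitless_cycle src rng g.
  case/andP=> _ sorted_p size_p; rewrite -(last_rcons g p g).
  by apply: (long_path_last_exitless NE) => //; rewrite size_rcons size_p.
move: path_a path_b size_s size_st; case/lastP: s => [|s e] //; case/lastP: t => [|t f] //.
rewrite !size_rcons => path_a path_b [size_s] [size_st].
have Ce := exitless _ _ _ path_a size_s.
have Cf := exitless _ _ _ path_b (esym size_st).
have [ef|ef] := eqVneq (rng e) (rng f); last by left; apply: pmon_rcons_orth.
move: (on_exitless_cycle_rng_inj Ce Cf ef) path_b => <- {f Cf ef} path_b.
have sole_e : sole_out_edge src e by case: Ce => _ /(_ 0%N).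
have red := pmon_rcons_sole R path_a path_b sole_e.
have [zero|[a' [b' [short_a short_b red']]]] :=
  IHn (v, s) (w, t) size_s (is_path_rcons path_a) (is_path_rcons path_b) size_st.
  by left; apply: (eqv_trans idL red zero).
right; exists a', b'; split; [exact: short_a|exact: short_b|].
by apply: (eqv_trans idL red red').
Qed.

End Reduction.

Section LinearCombinations.
Variables (R : pzRingType) (M : lmodType R) (n : nat) (G : 'I_n -> M).

Definition lincomb (c : nat -> R) : M := \sum_(i < n) c i *: G i.

Lemma lincomb0 : lincomb (fun _ => 0) = 0.
Proof. by rewrite /lincomb big1 // => i _; rewrite scale0r. Qed.

Lemma lincombB c d : lincomb (fun i => c i - d i) = lincomb c - lincomb d.
Proof. by rewrite /lincomb -sumrB; apply: eq_bigr => i _; rewrite scalerBl. Qed.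

Lemma lincombZ a c : lincomb (fun i => a * c i) = a *: lincomb c.
Proof. by rewrite /lincomb scaler_sumr; apply: eq_bigr => i _; rewrite scalerA. Qed.

Lemma lincomb_trunc c : lincomb (fun i => if (i < n)%N then c i else 0) = lincomb c.
Proof. by apply: eq_bigr => i _; rewrite ltn_ord. Qed.

Lemma lincomb_add_delta c (j : 'I_n) r :
  lincomb (fun i => c i + (if i == j then r else 0)) = r *: G j + lincomb c.
Proof.
rewrite /lincomb (eq_bigr (fun i : 'I_n => c i *: G i + (if i == j then r *: G i else 0))).
  by rewrite big_split /= -big_mkcond big_pred1_eq addrC.
by move=> i _; rewrite scalerDl -[_ == _ :> nat]/(i == j); case: eqP => // _; rewrite scale0r.
Qed.

End LinearCombinations.

Lemma lincomb_mulr (R : nzRingType) (A : lalgType R) n (G : 'I_n -> A) c a z :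
  (forall i, G i * z = a *: G i) -> lincomb G (fun i => c i * a) = lincomb G c * z.
Proof.
by move=> Gz; rewrite /lincomb mulr_suml; apply: eq_bigr => i _; rewrite -scalerAl Gz scalerA.
Qed.

Section ShortPathSpan.
Variables (V Ed : finType) (src rng : Ed -> V) (R : nzRingType).
Local Notation FA := (FA V Ed R).
Local Notation word := (@word V Ed R).
Local Notation Lv := (@Lv V Ed).
Local Notation pword := (@pword V Ed R).
Local Notation pword_star := (@pword_star V Ed R).
Local Notation pmon := (@pmon V Ed R).
Local Notation LPA := (LPA src rng R).
Local Notation "x === y" := (@leavitt_ideal V Ed src rng R (x - y)) (at level 70).
Local Notation idL := (@leavitt_two_sided_ideal V Ed src rng R).

Definition short_words : seq (seq Ed) :=
  [seq tval t | n <- iota 0 #|V|.+1, t <- enum {: n.-tuple Ed}].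

Definition short_paths : seq (V * seq Ed) := [seq (v, s) | v <- enum V, s <- short_words].

Definition short_pairs := [seq (a, b) | a <- short_paths, b <- short_paths].

Local Notation N := (size short_pairs).

Definition span_gen (i : 'I_N) : FA :=
  pmon (tnth (in_tuple short_pairs) i).1 (tnth (in_tuple short_pairs) i).2.

Local Notation span := (lincomb span_gen).

Lemma mem_short_paths a : (plen a <= #|V|)%N -> a \in short_paths.
Proof.
case: a => v s short_s; apply: allpairs_f; first by rewrite mem_enum.
by apply/allpairsPdep; exists (size s), (in_tuple s); rewrite mem_iota ltnS short_s mem_enum.
Qed.

Lemma span_gen_pmon a b : (plen a <= #|V|)%N -> (plen b <= #|V|)%N ->
  exists j, span_gen j = pmon a b.
Proof.
move=> short_a short_b.
have ab_in : (a, b) \in short_pairs by apply: allpairs_f; apply: mem_short_paths.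
have idx_lt : (index (a, b) short_pairs < N)%N by rewrite index_mem.
by exists (Ordinal idx_lt); rewrite /span_gen (tnth_nth (a, b)) nth_index.
Qed.

Lemma span_gen_mulC i (a : R) : span_gen i * a%:MP = a *: span_gen i.
Proof.
rewrite /span_gen; case: (tnth _ i) => [[v s] [w t]]; rewrite /pmon /=.
have [u ->] : exists u, pword (v, s) = word u.
  by case: s => [|e s]; [exists [:: Lv v]|exists (map (@Le V Ed) (e :: s))].
have [u' ->] : exists u', pword_star (w, t) = word u'.
  by case: t => [|e t]; [exists [:: Lv w]|exists (map (@Lg V Ed) (rev (e :: t)))].
by rewrite -word_cat word_mulC.
Qed.

Lemma LPA0_const (a : R) : LPA0 (\pi_LPA (a%:MP)).
Proof.
exists [seq (a, (v, [::]), (v, [::])) | v <- index_enum V].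
split; first by apply/allP => t /mapP[v _ ->].
apply: pi_eqv; rewrite big_map -scaler_sumr -mul_malgC.
apply: (eqv_trans idL (y := a%:MP * 1)); first by rewrite mulr1; apply: (eqv_refl idL).
apply: (eqv_mul idL (eqv_refl idL _)).
apply: (eqv_trans idL); first by apply: leavitt_rel_eqv; apply: rel_unit.
by apply: (eqv_sum idL) => v; apply: (eqv_sym idL); apply: vertex_idem.
Qed.

Hypothesis NE : condition_NE src rng.

Lemma sum_pmon_span (s : seq (R * (V * seq Ed) * (V * seq Ed))) :
  all (fun t => [&& is_path src rng t.1.2, is_path src rng t.2 & plen t.1.2 == plen t.2]) s ->
  exists c, \sum_(t <- s) t.1.1 *: (pword t.1.2 * pword_star t.2) === span c.
Proof.
elim: s => [|[[r a] b] s IHs] /=.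
  by exists (fun _ => 0); rewrite big_nil lincomb0; apply: (eqv_refl idL).
case/andP=> /and3P[path_a path_b /eqP ab] /IHs[c sum_s]; rewrite big_cons /=.
have [zero|[a' [b' [short_a short_b red]]]] := pmon_reduce R NE path_a path_b ab.
  exists c; apply: (eqv_add0l idL _ sum_s).
  by apply: eqv_scale0.
have [j span_j] := span_gen_pmon short_a short_b.
exists (fun i => c i + (if i == j then r else 0)); rewrite lincomb_add_delta span_j.
by apply: (eqv_add idL _ sum_s); apply: eqv_scale.
Qed.

Lemma LPA0_span x : LPA0 x -> exists c, x = \pi_LPA (span c).
Proof.
case=> s [path_s ->]; have [c sum_s] := sum_pmon_span path_s.
by exists c; apply: pi_eqv.
Qed.

End ShortPathSpan.

Section NoetherianTransfer.
Variables (V Ed : finType) (src rng : Ed -> V) (R : nzRingType).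
Local Notation LPA := (LPA src rng R).
Local Notation LPA0 := (@LPA0 V Ed src rng R).
Local Notation lpa_zero := (lpa_zero src rng R).
Local Notation lpa_sub := (@lpa_sub V Ed src rng R).
Local Notation lpa_mul := (@lpa_mul V Ed src rng R).
Local Notation N := (size (short_pairs V Ed)).
Local Notation span := (lincomb (@span_gen V Ed R)).

Section Action.
Variables (act : R -> R -> R).
Hypothesis act_r0 : forall a, act a 0 = 0.

Definition span_act_closed (J : LPA -> Prop) : Prop :=
  [/\ forall x, J x -> LPA0 x, J lpa_zero,
      (forall x y, J x -> J y -> J (lpa_sub x y)) &
      (forall a c, J (\pi_LPA (span c)) -> J (\pi_LPA (span (fun i => act a (c i)))))].

Definition span_preimage (J : LPA -> Prop) (c : nat -> R) : Prop :=
  (forall i, (N <= i)%N -> c i = 0) /\ J (\pi_LPA (span c)).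

Lemma span_preimage_submod J :
  span_act_closed J -> act_submod act N (span_preimage J).
Proof.
case=> _ J0 JB JZ; split.
- by move=> c [].
- by split=> //; rewrite lincomb0.
- move=> c d [c_supp Jc] [d_supp Jd]; split=> [i i_ge|].
    by rewrite c_supp ?d_supp ?subr0.
  by rewrite lincombB -lpa_sub_pi; apply: JB.
- move=> a c [c_supp Jc]; split=> [i i_ge|]; last exact: JZ.
  by rewrite c_supp ?act_r0.
Qed.

Hypothesis NE : condition_NE src rng.

Lemma ACC_span_act_closed (is_ideal : (LPA -> Prop) -> Prop) :
  ACC (act_ideal act) -> (forall J, is_ideal J -> span_act_closed J) -> ACC is_ideal.
Proof.
move=> accR closedJ C Cid Cmono.
have [M stable] := ACC_act_submod act_r0 accR
  (fun n => span_preimage_submod (closedJ _ (Cid n)))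
  (fun n c '(conj c_supp Cc) => conj c_supp (Cmono n _ Cc)).
exists M => n le_Mn x Cx.
have [inLPA0 _ _ _] := closedJ _ (Cid n).
have [c x_span] := LPA0_span NE (inLPA0 _ Cx); rewrite x_span in Cx *.
have [_] : span_preimage (C M) (fun i => if (i < N)%N then c i else 0).
  apply: (stable n le_Mn); split=> [i|]; first by rewrite ltnNge => ->.
  by rewrite lincomb_trunc.
by rewrite lincomb_trunc.
Qed.

End Action.

Lemma left_ideal_span_act_closed J :
  left_ideal_in LPA0 lpa_zero lpa_sub lpa_mul J ->
  span_act_closed (fun a r => a * r) J.
Proof.
case=> inLPA0 J0 JB JM; split=> // a c Jc.
rewrite (lincombZ _ a c) -mul_malgC -lpa_mul_pi.
by apply: JM Jc; apply: LPA0_const.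
Qed.

Lemma right_ideal_span_act_closed J :
  right_ideal_in LPA0 lpa_zero lpa_sub lpa_mul J ->
  span_act_closed (fun a r => r * a) J.
Proof.
case=> inLPA0 J0 JB JM; split=> // a c Jc.
rewrite (lincomb_mulr _ (fun i => span_gen_mulC i a)) -lpa_mul_pi.
by apply: JM Jc; apply: LPA0_const.
Qed.

End NoetherianTransfer.

Theorem corollary4p6 (V Ed : finType) (src rng : Ed -> V) (R : ringType) :
  condition_NE src rng ->
  (left_noetherian R -> LPA0_left_noetherian src rng R) /\
  (right_noetherian R -> LPA0_right_noetherian src rng R).
Proof.
move=> NE; split=> accR.
- apply: (ACC_span_act_closed (fun a => mulr0 a) NE (left_noetherian_ACC accR)).
  exact: left_ideal_span_act_closed.
- apply: (ACC_span_act_closed (fun a => mul0r a) NE (right_noetherian_ACC accR)).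
  exact: right_ideal_span_act_closed.
Qed.
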